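(* Let $H$ be a complex Hilbert space. Then: (1) if $\varphi_1,\varphi_2,\psi_1,\psi_2\in C[0,1]$ are real-valued, then for every $t\in[0,1]$, $$|n_t(\varphi_1,\psi_1;H)-n_t(\varphi_2,\psi_2;H)|\le|\varphi_1(t)-\varphi_2(t)|+|\psi_1(t)-\psi_2(t)|;$$ (2) if $\varphi,\psi,\varphi_n,\psi_n\in C[0,1]$ are real-valued and $\varphi_n\to\varphi$, $\psi_n\to\psi$ (pointwise on $[0,1]$), then for every $t\in[0,1]$, $n_t(\varphi,\psi;H)=\lim_{n\to\infty}n_t(\varphi_n,\psi_n;H)$.
   Context: $S_1(H)$ is the unit sphere of $H$; for real $\varphi,\psi$ on $[0,1]$, $\omega_t(\varphi,\psi;A)=\sup_{x\in S_1(H)}|\langle(\varphi(t)A+\psi(t)A^* )x,x\rangle|$, and the weighted numerical index is $n_t(\varphi,\psi;H)=\inf\{\omega_t(\varphi,\psi;A):A\in\mathbb{B}(H),\ \|A\|=1\}$. *)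

From HB Require Import structures.
From mathcomp Require Import all_boot all_order all_algebra.
From mathcomp Require Import complex.
From mathcomp Require Import all_classical all_reals all_analysis.
From Stdlib Require Import ClassicalEpsilon.
Set Implicit Arguments. Unset Strict Implicit. Unset Printing Implicit Defensive.
Import Order.TTheory GRing.Theory Num.Theory.
Local Open Scope ring_scope.

Section Hilbert.
Variables (R : realType) (H : lmodType R[i]) (ip : H -> H -> R[i]).

Definition cabs (z : R[i]) : R := complex.Re `|z|.

Definition hnorm (x : H) : R := Num.sqrt (complex.Re (ip x x)).

Definition is_complex_hilbert : Prop :=
  [/\ (forall (a : R[i]) (x y z : H), ip (a *: x + y) z = a * ip x z + ip y z),
      (forall x y : H, ip y x = ((ip x y)^*)%C),
      (forall x : H, 0 <= ip x x),
      (forall x : H, ip x x = 0 -> x = 0) &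
      (forall u : nat -> H,
         (forall e : R, 0 < e -> exists N : nat, forall m n : nat,
              (N <= m)%N -> (N <= n)%N -> hnorm (u m - u n) < e) ->
         exists l : H, forall e : R, 0 < e -> exists N : nat, forall n : nat,
              (N <= n)%N -> hnorm (u n - l) < e)].

Definition is_bounded_linear (A : H -> H) : Prop :=
  linear A /\ exists C : R, forall x : H, hnorm (A x) <= C * hnorm x.

Definition opnorm (A : H -> H) : R :=
  sup [set hnorm (A x) | x in [set x : H | hnorm x <= 1]].

Definition adjoint (A : H -> H) : H -> H :=
  epsilon (inhabits (fun x : H => x))
          (fun B : H -> H => forall x y : H, ip (A x) y = ip x (B y)).

Definition unit_sphere : set H := [set x : H | hnorm x = 1].

Definition omega_t (phi psi : R -> R) (t : R) (A : H -> H) : R :=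
  sup [set cabs (ip (((phi t)%:C)%C *: A x + ((psi t)%:C)%C *: adjoint A x) x)
      | x in unit_sphere].

Definition n_t (phi psi : R -> R) (t : R) : R :=
  inf [set omega_t phi psi t A
      | A in [set A : H -> H | is_bounded_linear A /\ opnorm A = 1]].

End Hilbert.

(* For an operator A of norm one and a unit vector x, Cauchy-Schwarz gives
   |<Ax,x>| <= 1 and |<A^*x,x>| = |<Ax,x>| <= 1, so every quantity
   |<(phi(t) A + psi(t) A^* ) x, x>| is 1-Lipschitz in (phi(t), psi(t)) for the
   l1 distance.  Suprema and infima of uniformly 1-Lipschitz families are again
   1-Lipschitz, which gives (1); (2) follows from (1) at the fixed t.
   The adjoint is only defined by choice; it satisfies <Ax,y> = <x,A^*y> by the
   Riesz representation theorem, proved by minimizing the energy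
   ||x||^2/2 - Re f(x): by the parallelogram law minimizing sequences are
   Cauchy, and the first-order condition at the minimizer gives f = <., l>. *)

From HB Require Import structures.
From mathcomp Require Import all_boot all_order all_algebra.
From mathcomp Require Import complex.
From mathcomp Require Import all_classical all_reals all_analysis.
From mathcomp Require Import ring lra.
From Stdlib Require Import ClassicalEpsilon.
Import Order.TTheory GRing.Theory Num.Theory.
Import numFieldNormedType.Exports.
Set Implicit Arguments. Unset Strict Implicit. Unset Printing Implicit Defensive.
Local Open Scope ring_scope.
Local Open Scope classical_set_scope.

Section ComplexModulus.
Variable R : realType.
Implicit Types (z w : R[i]) (r : R).

Lemma complex_ext z w :
  complex.Re z = complex.Re w -> complex.Im z = complex.Im w -> z = w.
Proof. by case: z w => [a b] [c d] /= -> ->. Qed.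

Lemma ReD z w : complex.Re (z + w) = complex.Re z + complex.Re w.
Proof. by case: z w => [a b] [c d]. Qed.
Lemma ImD z w : complex.Im (z + w) = complex.Im z + complex.Im w.
Proof. by case: z w => [a b] [c d]. Qed.
Lemma ReN z : complex.Re (- z) = - complex.Re z. Proof. by case: z. Qed.
Lemma ImN z : complex.Im (- z) = - complex.Im z. Proof. by case: z. Qed.
Lemma ReM z w :
  complex.Re (z * w) = complex.Re z * complex.Re w - complex.Im z * complex.Im w.
Proof. by case: z w => [a b] [c d]. Qed.
Lemma ImM z w :
  complex.Im (z * w) = complex.Re z * complex.Im w + complex.Im z * complex.Re w.
Proof. by case: z w => [a b] [c d]. Qed.
Lemma ReJ z : complex.Re z^*%C = complex.Re z. Proof. by case: z. Qed.
Lemma ImJ z : complex.Im z^*%C = - complex.Im z. Proof. by case: z. Qed.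

Definition ReImE := (ReD, ImD, ReN, ImN, ReM, ImM, ReJ, ImJ).

Lemma cabsC z : (cabs z)%:C%C = `|z|.
Proof. by rewrite /cabs normc_def. Qed.

Lemma cabs_ge0 z : 0 <= cabs z.
Proof. by rewrite -ler0c cabsC. Qed.

Lemma cabsD z w : cabs (z + w) <= cabs z + cabs w.
Proof. by rewrite -lecR rmorphD /= !cabsC ler_normD. Qed.

Lemma cabsN z : cabs (- z) = cabs z.
Proof. by apply: complexI; rewrite !cabsC normrN. Qed.

Lemma cabsM z w : cabs (z * w) = cabs z * cabs w.
Proof. by apply: complexI; rewrite rmorphM /= !cabsC normrM. Qed.

Lemma cabsJ z : cabs z^*%C = cabs z.
Proof. by apply: complexI; rewrite !cabsC normcJ. Qed.

Lemma cabs_real r : cabs r%:C%C = `|r|.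
Proof. by rewrite /cabs normc_def /= expr0n addr0 sqrtr_sqr. Qed.

Lemma normRe_le_cabs z : `|complex.Re z| <= cabs z.
Proof. by rewrite -lecR cabsC normc_ge_Re. Qed.

Lemma cabs_dist z w : `|cabs z - cabs w| <= cabs (z - w).
Proof.
have le_z := cabsD w (z - w); rewrite addrC subrK in le_z.
have le_w := cabsD z (w - z); rewrite addrC subrK -(cabsN (w - z)) opprB in le_w.
rewrite ler_norml; apply/andP; split; lra.
Qed.

End ComplexModulus.

Section InnerProduct.
Variables (R : realType) (H : lmodType R[i]) (ip : H -> H -> R[i]).
Hypothesis hH : is_complex_hilbert ip.
Implicit Types (x y z : H) (a : R[i]).

Lemma ip_swap x y : ip y x = (ip x y)^*%C.
Proof. by case: hH. Qed.

Lemma ip0l z : ip 0 z = 0.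
Proof.
case: hH => lin _ _ _ _; have := lin 1 0 0 z.
by rewrite scale1r addr0 mul1r -{1}[ip 0 z]addr0 => /addrI.
Qed.

Lemma ipZl a x z : ip (a *: x) z = a * ip x z.
Proof. by case: hH => lin _ _ _ _; rewrite -[a *: x]addr0 lin ip0l addr0. Qed.

Lemma ipDl x y z : ip (x + y) z = ip x z + ip y z.
Proof. by case: hH => lin _ _ _ _; have := lin 1 x y z; rewrite scale1r mul1r. Qed.

Lemma ipNl x z : ip (- x) z = - ip x z.
Proof. by rewrite -scaleN1r ipZl mulN1r. Qed.

Lemma ipZr a x z : ip z (a *: x) = a^*%C * ip z x.
Proof. by rewrite ip_swap ipZl rmorphM /= -ip_swap. Qed.

Lemma ipDr x y z : ip z (x + y) = ip z x + ip z y.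
Proof. by rewrite ip_swap ipDl rmorphD /= -!ip_swap. Qed.

Lemma ipNr x z : ip z (- x) = - ip z x.
Proof. by rewrite ip_swap ipNl rmorphN /= -ip_swap. Qed.

Lemma hnorm_ge0 x : 0 <= hnorm ip x.
Proof. exact: sqrtr_ge0. Qed.

Lemma ip_self x : ip x x = (hnorm ip x ^+ 2)%:C%C.
Proof.
case: hH => _ _ ge0 _ _; have := ge0 x; rewrite lecE /= => /andP[/eqP Im0 Re_ge0].
by apply: complex_ext; rewrite /hnorm /= ?sqr_sqrtr.
Qed.

Lemma hnorm_sqr x : hnorm ip x ^+ 2 = complex.Re (ip x x).
Proof. by rewrite ip_self. Qed.

Lemma hnormZ a x : hnorm ip (a *: x) = cabs a * hnorm ip x.
Proof.
rewrite [in LHS]/hnorm ipZl ipZr mulrA -sqr_normc -cabsC ip_self.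
rewrite -rmorphXn -rmorphM /= -exprMn sqrtr_sqr ger0_norm //.
by rewrite mulr_ge0 ?cabs_ge0 ?hnorm_ge0.
Qed.

Lemma hnormN x : hnorm ip (- x) = hnorm ip x.
Proof. by rewrite /hnorm ipNl ipNr opprK. Qed.

Lemma hnormD_sqr x y :
  hnorm ip (x + y) ^+ 2 = hnorm ip x ^+ 2 + 2 * complex.Re (ip x y) + hnorm ip y ^+ 2.
Proof. by rewrite !hnorm_sqr ipDl !ipDr (ip_swap x y) !ReImE; ring. Qed.

Lemma parallelogram x y :
  hnorm ip (x - y) ^+ 2 = 2 * hnorm ip x ^+ 2 + 2 * hnorm ip y ^+ 2 - hnorm ip (x + y) ^+ 2.
Proof. by rewrite !hnormD_sqr hnormN ipNr ReN; ring. Qed.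

Lemma cauchy_schwarz x y : cabs (ip x y) <= hnorm ip x * hnorm ip y.
Proof.
have [/eqP|y_neq0] := eqVneq (hnorm ip y) 0.
  rewrite -sqrf_eq0 => /eqP y_sqr0.
  have -> : y = 0 by case: hH => _ _ _ definite _; apply: definite; rewrite ip_self y_sqr0.
  by rewrite -(scale0r 0) ipZr rmorph0 mul0r /cabs normr0 mulr_ge0 ?hnorm_ge0.
set z := ip x y; set Y := hnorm ip y ^+ 2.
have Y_gt0 : 0 < Y by rewrite exprn_gt0 // lt_def y_neq0 hnorm_ge0.
have zJz : z^*%C * z = (cabs z ^+ 2)%:C%C by rewrite mulrC -sqr_normc -cabsC rmorphXn.
(* 0 <= ||Y x - <x,y> y||^2 = Y (Y ||x||^2 - |<x,y>|^2) *)
have := sqr_ge0 (hnorm ip (Y%:C%C *: x + - (z *: y))).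
rewrite hnormD_sqr hnormN !hnormZ cabs_real ipZl ipNr ipZr -/z zJz.
rewrite -rmorphN -rmorphM /= (ger0_norm (ltW Y_gt0)) => ge0.
have : Y * cabs z ^+ 2 <= Y * (hnorm ip x * hnorm ip y) ^+ 2 by rewrite /Y in ge0 *; nra.
rewrite ler_pM2l // => le_sqr.
by rewrite -(@ler_pXn2r _ 2) // ?nnegrE ?mulr_ge0 ?hnorm_ge0 ?cabs_ge0.
Qed.

End InnerProduct.

Lemma quad_ge0_linear_coef_eq0 (R : realFieldType) (a c : R) :
  (forall t : R, 0 <= t * a + t ^+ 2 * c) -> a = 0.
Proof.
move=> ge0; set s := (`|c| + 1)^-1.
have s_gt0 : 0 < s by rewrite invr_gt0 ltr_wpDl.
have s_inv : s * (`|c| + 1) = 1 by rewrite mulVf // gt_eqF // ltr_wpDl.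
have sc : s * `|c| = 1 - s by rewrite mulrDr mulr1 in s_inv; lra.
have c_le : (s * a) ^+ 2 * c <= s * a ^+ 2 * (s * `|c|).
  have -> : s * a ^+ 2 * (s * `|c|) = (s * a) ^+ 2 * `|c| by ring.
  by rewrite ler_wpM2l ?sqr_ge0 ?ler_norm.
have := ge0 (- (s * a)); rewrite sc in c_le => ge0_at.
have : (s * a) ^+ 2 <= 0 by nra.
rewrite le_eqVlt ltNge sqr_ge0 orbF sqrf_eq0 mulf_eq0 => /orP[/eqP s0|/eqP //].
by move: s_gt0; rewrite s0 ltxx.
Qed.

Section Riesz.
Variables (R : realType) (H : lmodType R[i]) (ip : H -> H -> R[i]).
Hypothesis hH : is_complex_hilbert ip.
Variables (f : H -> R[i]) (K : R).
Hypotheses (fZ : forall a x, f (a *: x) = a * f x)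
  (fD : forall x y, f (x + y) = f x + f y)
  (f_bounded : forall x, cabs (f x) <= K * hnorm ip x).

Let energy x := hnorm ip x ^+ 2 / 2 - complex.Re (f x).

Let Re_f_le x : complex.Re (f x) <= K * hnorm ip x.
Proof.
have := f_bounded x; have := normRe_le_cabs (f x); have := ler_norm (complex.Re (f x)); lra.
Qed.

Lemma energy_has_inf : has_inf (range energy).
Proof.
split; first by exists (energy 0), 0.
exists (- K ^+ 2 / 2) => _ [x _ <-]; rewrite /energy.
have := Re_f_le x; have := sqr_ge0 (hnorm ip x - K); nra.
Qed.

Let m := inf (range energy).

Let energy_ge x : m <= energy x.
Proof. by apply: ge_inf; [case: energy_has_inf | exists x]. Qed.

(* parallelogram law, plus: the midpoint of x and y has energy at least m *)
Lemma energy_dist x y :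
  hnorm ip (x - y) ^+ 2 <= 4 * (energy x - m) + 4 * (energy y - m).
Proof.
have := energy_ge ((2^-1)%:C%C *: (x + y)).
rewrite /energy (parallelogram hH) (hnormZ hH) cabs_real fZ fD ReImE /=.
rewrite ger0_norm ?invr_ge0 ?ler0n // exprMn mul0r subr0; lra.
Qed.

Lemma energy_le_dist l x : energy l <= energy x + hnorm ip (x - l) * (hnorm ip l + K).
Proof.
rewrite -[in energy x](subrKC l x); move: (x - l) => v.
rewrite /energy (hnormD_sqr hH) fD ReD.
have := cauchy_schwarz hH l v; have := normRe_le_cabs (ip l v).
have := ler_norm (- complex.Re (ip l v)); rewrite normrN.
have := Re_f_le v; have := sqr_ge0 (hnorm ip v); lra.
Qed.

Lemma energy_minimizing_cvg : exists2 u : nat -> H,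
  (forall n, energy (u n) < m + harmonic n) & exists l, hnorm ip (u n - l) @[n --> \oo] --> 0.
Proof.
have /choice[u u_lt] : forall n, exists x, energy x < m + harmonic n.
  move=> n; have [_ [x _ <-] lt] := inf_adherent (harmonic_gt0 n) energy_has_inf.
  by exists x.
exists u => //; have [l u_to_l] : exists l, forall e, 0 < e ->
    exists N, forall n, (N <= n)%N -> hnorm ip (u n - l) < e.
  case: hH => _ _ _ _ complete; apply: complete => e e_gt0.
  have e8_gt0 : 0 < e ^+ 2 / 8 by rewrite divr_gt0 ?exprn_gt0.
  have [N _ small] := cvgr_lt 0 cvg_harmonic _ e8_gt0.
  exists N => i j iN jN; rewrite -(@ltr_pXn2r _ 2) ?nnegrE ?hnorm_ge0 ?ltW //.
  have := energy_dist (u i) (u j); have := u_lt i; have := u_lt j.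
  have := small i iN; have := small j jN; lra.
exists l; apply/cvgrPdist_lt => e e_gt0; have [N small] := u_to_l e e_gt0.
by exists N => // n /small; rewrite sub0r normrN ger0_norm ?hnorm_ge0.
Qed.

Lemma energy_minimizer : exists l, forall x, energy l <= energy x.
Proof.
have [u u_lt [l d_to_0]] := energy_minimizing_cvg; set C := hnorm ip l + K.
have err_to_0 : harmonic n + hnorm ip (u n - l) * C @[n --> \oo] --> 0.
  have -> : 0 = 0 + 0 * C :> R by rewrite mul0r addr0.
  by apply: cvgD; [exact: cvg_harmonic | apply: cvgM; [exact: d_to_0 | exact: cvg_cst]].
exists l => x; have : energy l - m <= 0.
  apply: cvgr_to_ge err_to_0 _; apply: nearW => n.
  by have := energy_le_dist l (u n); rewrite -/C; have := u_lt n; lra.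
by have := energy_ge x; lra.
Qed.

Lemma energy_minimizer_represents l :
  (forall x, energy l <= energy x) -> forall w, f w = ip w l.
Proof.
move=> l_min w.
have Re_eq v : complex.Re (ip l v) = complex.Re (f v).
  apply/eqP; rewrite -subr_eq0; apply/eqP.
  apply: (@quad_ge0_linear_coef_eq0 _ _ (hnorm ip v ^+ 2 / 2)) => t.
  have := l_min (l + t%:C%C *: v).
  rewrite /energy (hnormD_sqr hH) (hnormZ hH) cabs_real (ipZr hH) fD fZ !ReImE /=.
  rewrite exprMn real_normK ?num_real //; lra.
have := Re_eq ('i%C *: w); rewrite (ipZr hH) fZ !ReImE /= => Im_eq.
by apply: complex_ext; rewrite (ip_swap hH) ReImE ?Re_eq //; lra.
Qed.

End Riesz.

Lemma riesz_representation (R : realType) (H : lmodType R[i]) (ip : H -> H -> R[i])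
    (f : H -> R[i]) (K : R) :
  is_complex_hilbert ip ->
  (forall a x, f (a *: x) = a * f x) -> (forall x y, f (x + y) = f x + f y) ->
  (forall x, cabs (f x) <= K * hnorm ip x) ->
  exists l, forall w, f w = ip w l.
Proof.
move=> hH fZ fD f_bounded; have [l l_min] := energy_minimizer hH fZ fD f_bounded.
by exists l; apply: energy_minimizer_represents l_min.
Qed.

Lemma linear_scalable_additive (K : pzRingType) (U V : lmodType K) (A : U -> V) :
  linear A -> (forall a x, A (a *: x) = a *: A x) /\ (forall x y, A (x + y) = A x + A y).
Proof.
move=> lin; have A0 : A 0 = 0.
  by have := lin 1 0 0; rewrite !scale1r addr0 -{1}[A 0]addr0 => /addrI.
split=> [a x|x y]; first by rewrite -[a *: x]addr0 lin A0 addr0.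
by have := lin 1 x y; rewrite !scale1r.
Qed.

Section Operators.
Variables (R : realType) (H : lmodType R[i]) (ip : H -> H -> R[i]).
Implicit Types (A : H -> H) (x y : H).

Lemma hnorm_le_opnorm A x :
  is_bounded_linear ip A -> hnorm ip x <= 1 -> hnorm ip (A x) <= opnorm ip A.
Proof.
case=> _ [C A_le] x_le1; apply: sup_upper_bound; last by exists x.
split; first by exists (hnorm ip (A x)), x.
exists `|C| => _ [y /= y_le1 <-]; apply: le_trans (A_le y) _.
have := hnorm_ge0 ip y; have := ler_norm C; have := normr_ge0 C; nra.
Qed.

Hypothesis hH : is_complex_hilbert ip.

Lemma adjointP A : is_bounded_linear ip A ->
  forall x y, ip (A x) y = ip x (adjoint ip A y).
Proof.
case=> /linear_scalable_additive[AZ AD] [C A_le].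
suff [B AB] : exists B : H -> H, forall x y, ip (A x) y = ip x (B y).
  exact: (epsilon_spec _ (fun B => forall x y, ip (A x) y = ip x (B y)) (ex_intro _ B AB)).
have /choice[B AB] y : exists b, forall x, ip (A x) y = ip x b.
  apply: (@riesz_representation _ _ _ (fun x => ip (A x) y) (C * hnorm ip y) hH) => [a x|x z|x].
  - by rewrite AZ (ipZl hH).
  - by rewrite AD (ipDl hH).
  - apply: le_trans (cauchy_schwarz hH _ _) _.
    by rewrite mulrAC ler_wpM2r ?hnorm_ge0.
by exists B.
Qed.

Lemma cabs_ip_sphere_le1 A x :
  is_bounded_linear ip A -> opnorm ip A = 1 -> unit_sphere ip x ->
  cabs (ip (A x) x) <= 1 /\ cabs (ip (adjoint ip A x) x) <= 1.
Proof.
move=> A_bdd A_norm1 x_unit; have x1 : hnorm ip x = 1 by [].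
have Ax_le1 : hnorm ip (A x) <= 1 by rewrite -A_norm1 hnorm_le_opnorm ?x1.
have Axx_le1 : cabs (ip (A x) x) <= 1.
  by apply: le_trans (cauchy_schwarz hH _ _) _; rewrite x1 mulr1.
by split; rewrite // (ip_swap hH) -(adjointP A_bdd) cabsJ.
Qed.

End Operators.

Section SupImage.
Variables (R : realType) (T : Type) (D : set T).
Implicit Types (f g : T -> R) (d : R).

Lemma sup_image_ge0 f :
  has_ubound (f @` D) -> (forall x, D x -> 0 <= f x) -> 0 <= sup (f @` D).
Proof.
move=> f_ub f_ge0; have [->|/set0P[x Dx]] := eqVneq D set0.
  by rewrite image_set0 sup0.
apply: le_trans (f_ge0 x Dx) _; apply: sup_upper_bound; last by exists x.
by split=> //; exists (f x), x.
Qed.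

Lemma sup_image_le_add f g d : D !=set0 -> has_ubound (g @` D) ->
  (forall x, D x -> f x <= g x + d) -> sup (f @` D) <= sup (g @` D) + d.
Proof.
move=> [x0 Dx0] g_ub f_le; apply: ge_sup; first by exists (f x0), x0.
move=> _ [x Dx <-]; apply: le_trans (f_le x Dx) _; rewrite lerD2r.
by apply: sup_upper_bound; [split=> //; exists (g x0), x0 | exists x].
Qed.

Lemma sup_image_dist f g d :
  has_ubound (f @` D) -> has_ubound (g @` D) -> 0 <= d ->
  (forall x, D x -> `|f x - g x| <= d) -> `|sup (f @` D) - sup (g @` D)| <= d.
Proof.
move=> f_ub g_ub d_ge0 fg_le; have [D0|/set0P D0] := eqVneq D set0.
  by rewrite D0 !image_set0 subrr normr0.
rewrite ler_distl; apply/andP; split; first rewrite lerBlDr.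
  by apply: sup_image_le_add => // x /fg_le; rewrite ler_distl lerBlDr => /andP[].
by apply: sup_image_le_add => // x /fg_le; rewrite ler_distl => /andP[].
Qed.

Lemma inf_image_dist f g d :
  has_lbound (f @` D) -> has_lbound (g @` D) -> 0 <= d ->
  (forall x, D x -> `|f x - g x| <= d) -> `|inf (f @` D) - inf (g @` D)| <= d.
Proof.
move=> /has_lb_ubN f_ub /has_lb_ubN g_ub d_ge0 fg_le.
rewrite /inf opprK addrC distrC !image_comp.
rewrite !image_comp in f_ub g_ub; apply: sup_image_dist => // x Dx.
by rewrite /= opprK addrC distrC fg_le.
Qed.

End SupImage.

Section WeightedNumericalIndex.
Variable R : realType.

Lemma cabs_comb_le (p s : R) (a b : R[i]) : cabs a <= 1 -> cabs b <= 1 ->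
  cabs (p%:C%C * a + s%:C%C * b) <= `|p| + `|s|.
Proof.
move=> a_le1 b_le1; apply: le_trans (cabsD _ _) _.
by rewrite !cabsM !cabs_real lerD // ler_piMr.
Qed.

Lemma cabs_comb_dist (p1 p2 s1 s2 : R) (a b : R[i]) : cabs a <= 1 -> cabs b <= 1 ->
  `|cabs (p1%:C%C * a + s1%:C%C * b) - cabs (p2%:C%C * a + s2%:C%C * b)|
    <= `|p1 - p2| + `|s1 - s2|.
Proof.
move=> a_le1 b_le1; apply: le_trans (cabs_dist _ _) _.
have -> : p1%:C%C * a + s1%:C%C * b - (p2%:C%C * a + s2%:C%C * b)
    = (p1 - p2)%:C%C * a + (s1 - s2)%:C%C * b by rewrite !rmorphB /=; ring.
exact: cabs_comb_le.
Qed.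

Variables (H : lmodType R[i]) (ip : H -> H -> R[i]).
Hypothesis hH : is_complex_hilbert ip.
Implicit Types (phi psi : R -> R) (t : R) (A : H -> H).

Lemma omega_t_term_le phi psi t A x :
  is_bounded_linear ip A -> opnorm ip A = 1 -> unit_sphere ip x ->
  cabs (ip ((phi t)%:C%C *: A x + (psi t)%:C%C *: adjoint ip A x) x)
    <= `|phi t| + `|psi t|.
Proof.
move=> A_bdd A_norm1 /(cabs_ip_sphere_le1 hH A_bdd A_norm1)[Axx_le1 A'xx_le1].
by rewrite (ipDl hH) !(ipZl hH) cabs_comb_le.
Qed.

Lemma omega_t_ge0 phi psi t A :
  is_bounded_linear ip A -> opnorm ip A = 1 -> 0 <= omega_t ip phi psi t A.
Proof.
move=> A_bdd A_norm1; apply: sup_image_ge0 => [|x _]; last exact: cabs_ge0.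
by exists (`|phi t| + `|psi t|) => _ [x /(omega_t_term_le _ _ _ A_bdd A_norm1) le <-].
Qed.

Lemma omega_t_dist phi1 psi1 phi2 psi2 t A :
  is_bounded_linear ip A -> opnorm ip A = 1 ->
  `|omega_t ip phi1 psi1 t A - omega_t ip phi2 psi2 t A|
    <= `|phi1 t - phi2 t| + `|psi1 t - psi2 t|.
Proof.
move=> A_bdd A_norm1; apply: sup_image_dist; rewrite ?addr_ge0 //.
- by exists (`|phi1 t| + `|psi1 t|) => _ [x /(omega_t_term_le _ _ _ A_bdd A_norm1) le <-].
- by exists (`|phi2 t| + `|psi2 t|) => _ [x /(omega_t_term_le _ _ _ A_bdd A_norm1) le <-].
move=> x /(cabs_ip_sphere_le1 hH A_bdd A_norm1)[Axx_le1 A'xx_le1].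
by rewrite !(ipDl hH) !(ipZl hH) cabs_comb_dist.
Qed.

Lemma n_t_dist phi1 psi1 phi2 psi2 t :
  `|n_t ip phi1 psi1 t - n_t ip phi2 psi2 t|
    <= `|phi1 t - phi2 t| + `|psi1 t - psi2 t|.
Proof.
apply: inf_image_dist; rewrite ?addr_ge0 //.
- by exists 0 => _ [A [A_bdd A_norm1] <-]; apply: omega_t_ge0.
- by exists 0 => _ [A [A_bdd A_norm1] <-]; apply: omega_t_ge0.
by move=> A [A_bdd A_norm1]; apply: omega_t_dist.
Qed.

End WeightedNumericalIndex.

Unset Implicit Arguments. Set Strict Implicit.

Theorem theorem4p8 (R : realType) (H : lmodType R[i]) (ip : H -> H -> R[i])
  (hH : is_complex_hilbert ip) :
  (forall phi1 phi2 psi1 psi2 : R -> R,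
      {within `[0, 1], continuous phi1} -> {within `[0, 1], continuous phi2} ->
      {within `[0, 1], continuous psi1} -> {within `[0, 1], continuous psi2} ->
      forall t : R, t \in `[0, 1]%R ->
        `|n_t ip phi1 psi1 t - n_t ip phi2 psi2 t|
          <= `|phi1 t - phi2 t| + `|psi1 t - psi2 t|)
  /\
  (forall (phi psi : R -> R) (phin psin : nat -> R -> R),
      {within `[0, 1], continuous phi} -> {within `[0, 1], continuous psi} ->
      (forall n, {within `[0, 1], continuous phin n}) ->
      (forall n, {within `[0, 1], continuous psin n}) ->
      (forall t : R, t \in `[0, 1]%R -> (fun n => phin n t) @ \oo --> phi t) ->
      (forall t : R, t \in `[0, 1]%R -> (fun n => psin n t) @ \oo --> psi t) ->
      forall t : R, t \in `[0, 1]%R ->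
        (fun n => n_t ip (phin n) (psin n) t) @ \oo --> n_t ip phi psi t).
Proof.
split=> [phi1 phi2 psi1 psi2 _ _ _ _ t _|phi psi phin psin _ _ _ _ phin_to psin_to t t01].
  exact: n_t_dist.
apply/cvgrPdist_lt => e e_gt0; have e2_gt0 : 0 < e / 2 by rewrite divr_gt0.
have phi_near := (cvgrPdist_lt _ _).1 (phin_to t t01) _ e2_gt0.
have psi_near := (cvgrPdist_lt _ _).1 (psin_to t t01) _ e2_gt0.
near=> n; apply: le_lt_trans (n_t_dist hH _ _ _ _ t) _.
by rewrite [e]splitr; apply: ltrD; near: n; [exact: phi_near | exact: psi_near].
Unshelve. all: by end_near.
Qed.
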